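(* Let $\Gamma\subsetneqq\mathbb{R}^n$ be an open convex cone with vertex at the origin such that $\{\lambda:\lambda_i>0\ \forall i\}\subset\Gamma\subset\{\lambda:\sum_i\lambda_i>0\}$, and let $f$ be a smooth symmetric function on $\Gamma$ with $\frac{\partial f}{\partial\lambda_i}>0$ in $\Gamma$ for all $i$ and $\limsup_{\lambda\to\lambda_0}f(\lambda)<1$ for every $\lambda_0\in\partial\Gamma$. Let $A=\mathrm{diag}(a_1,\dots,a_n)\in\mathcal{A}$ with $0<a_1\leq\cdots\leq a_n$. Let $g:[1,\infty)\to\mathbb{R}$ be the unique smooth function with $(g(w),a_2w,\dots,a_nw)\in\Gamma$ and $f(g(w),a_2w,\dots,a_nw)=1$ for $w\geq1$. For $\delta\geq0$ and $c_2>1$ let $w_{c_2,\delta}(s)$ be the solution on $[1,+\infty)$ of $$\frac{dw}{ds}=\frac{g(w)-a_1w}{(2a_n+\delta)s},\qquad w(1)=c_2.$$ Then for every $s\in[1,+\infty)$, $0<\frac{\partial w_{c_2,\delta}}{\partial c_2}(s)\leq1$ and $\lim_{c_2\to+\infty}w_{c_2,\delta}(s)=+\infty$.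
   Context: $S^+(n)$ is the set of real symmetric positive definite $n\times n$ matrices; for $A\in S^+(n)$, $a=\lambda(A)$ denotes its eigenvalues, $\hat a=\max_ia_i$, $\hat f_\lambda(a)=\max_i\frac{\partial f}{\partial\lambda_i}(a)$, and $\mathcal{A}:=\{A\in S^+(n): f(a)=1,\ \frac{\nabla f(a)\cdot a}{2\hat a\hat f_\lambda(a)}>1\}$. *)

From HB Require Import structures.
From mathcomp Require Import all_boot all_order all_algebra.
From mathcomp Require Import all_classical all_reals all_analysis.
From mathcomp Require Import fingroup perm.
Set Implicit Arguments. Unset Strict Implicit. Unset Printing Implicit Defensive.
Import Order.TTheory GRing.Theory Num.Theory.
Import numFieldNormedType.Exports.
Local Open Scope classical_set_scope.
Local Open Scope ring_scope.

Section Defs.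
Variables (R : realType) (n : nat).
Notation V := 'rV[R]_n.

Definition basis_vec (i : 'I_n) : V := delta_mx 0 i.

Definition pderiv (f : V -> R) (i : 'I_n) (x : V) : R := 'D_(basis_vec i) f x.

Fixpoint iter_deriv (vs : seq V) (f : V -> R) : V -> R :=
  match vs with
  | [::] => f
  | v :: vs' => fun x => 'D_v (iter_deriv vs' f) x
  end.

Definition smooth_on (U : set V) (f : V -> R) : Prop :=
  forall (vs : seq V), (forall x, U x -> forall v, derivable (iter_deriv vs f) x v)
    /\ {in U, continuous (iter_deriv vs f)}.

Definition open_convex_cone (G : set V) : Prop :=
  [/\ open G,
      (forall x t, G x -> 0 < t -> G (t *: x)) &
      (forall x y t, G x -> G y -> 0 <= t <= 1 -> G ((1 - t) *: x + t *: y))].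

Definition permv (s : {perm 'I_n}) (x : V) : V := \row_i x 0 (s i).

Definition symmetric_on (G : set V) (f : V -> R) : Prop :=
  forall (s : {perm 'I_n}) x, G x -> G (permv s x) /\ f (permv s x) = f x.

Definition bdry (G : set V) : set V := closure G `\` interior G.

(* limsup_{x -> x0, x in G} f x < c, written out *)
Definition limsup_lt (G : set V) (f : V -> R) (x0 : V) (c : R) : Prop :=
  exists2 c' : R, c' < c & \forall x \near x0, G x -> f x <= c'.

Definition vmax (x : V) (i0 : 'I_n) : R := \big[Num.max/x 0 i0]_(i < n) x 0 i.
Definition fhat_lambda (f : V -> R) (x : V) (i0 : 'I_n) : R :=
  \big[Num.max/pderiv f i0 x]_(i < n) pderiv f i x.

Definition grad_dot (f : V -> R) (x : V) : R := \sum_(i < n) pderiv f i x * x 0 i.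

Definition spd (A : 'M[R]_n) : Prop :=
  A^T = A /\ forall u : 'cV[R]_n, u != 0 -> 0 < (u^T *m A *m u) 0 0.

(* a is (an ordering of) the eigenvalues of A, with multiplicity *)
Definition eigvals (A : 'M[R]_n) (a : V) : Prop :=
  char_poly A = \prod_(i < n) ('X - (a 0 i)%:P).
End Defs.

(* the set calA (needs n >= 1 to speak of max) *)
Definition calA (R : realType) (n : nat) (f : 'rV[R]_n.+1 -> R) (A : 'M[R]_n.+1) : Prop :=
  spd A /\ exists2 a : 'rV[R]_n.+1, eigvals A a &
    f a = 1 /\ 1 < grad_dot f a / (2 * vmax a ord0 * fhat_lambda f a ord0).

(* Symmetry of f and the eigenvalues of diag a give f(a) = 1. As f increases in every
   coordinate, the defect H(w) = g(w) - a_1 w vanishes at w = 1 and is strictly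
   decreasing; a two-step mean value argument on f near a, and sum_i lambda_i > 0 on
   Gamma away from a, bound it below by - L (w - 1).

   For w' = H(w) / (C s), C = 2 a_n + delta, that bound makes (w - 1) exp(L s / C)
   nondecreasing, so solutions with w(1) = c2 > 1 stay above 1, decrease, and satisfy
   w(s) >= 1 + (c2 - 1) exp(L (1 - s) / C), which tends to +oo with c2. The equation
   is invariant under s -> t s, so by uniqueness w_{w_c(t)}(s) = w_c(t s); inverting
   t -> w_c(t) near c2 then gives dw/dc2 = H(w(s)) / H(c2), which lies in (0, 1]
   because 1 < w(s) <= c2. *)

From HB Require Import structures.
From mathcomp Require Import all_boot all_order all_algebra.
From mathcomp Require Import all_classical all_reals all_analysis.
From mathcomp Require Import fingroup perm.
From mathcomp.algebra_tactics Require Import ring lra.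
Set Implicit Arguments. Unset Strict Implicit. Unset Printing Implicit Defensive.
Import Order.TTheory GRing.Theory Num.Theory.
Import numFieldNormedType.Exports.
Local Open Scope classical_set_scope.
Local Open Scope ring_scope.

Lemma eigvals_diag_perm (R : realType) (m : nat) (a a' : 'rV[R]_m) :
  eigvals (diag_mx a) a' -> exists s : {perm 'I_m}, a' = permv s a.
Proof.
rewrite /eigvals char_poly_trig ?diag_mx_is_trig // => E.
have /prod_XsubC_eq : \prod_(x <- [seq a' 0 i | i <- enum 'I_m]) ('X - x%:P) =
                      \prod_(x <- [seq a 0 i | i <- enum 'I_m]) ('X - x%:P).
  rewrite !big_map -E [index_enum _]unlock; apply: eq_bigr => i _.
  by rewrite !mxE eqxx mulr1n.
have -> : [seq a 0 i | i <- enum 'I_m] = [tuple a 0 i | i < m] by [].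
case/tuple_permP => s Es; exists s; apply/rowP => i; rewrite mxE.
have := congr1 (nth 0 ^~ i) Es.
by rewrite (nth_map i) ?size_enum_ord // nth_ord_enum /= (nth_map i) ?size_enum_ord
  // nth_ord_enum tnth_mktuple.
Qed.

Section LineDerivative.
Variables (R : realType) (V : normedModType R) (f : V -> R).

Lemma is_derive_line (x v : V) (t : R) :
  derivable f (t *: v + x) v ->
  is_derive t 1 (fun s => f (s *: v + x)) ('D_v f (t *: v + x)).
Proof.
have E : (fun h : R => h^-1 *: ((fun s => f (s *: v + x)) (h *: 1 + t) - f (t *: v + x))) =
         (fun h : R => h^-1 *: (f (h *: v + (t *: v + x)) - f (t *: v + x))).
  by apply/funext => h; rewrite scalerDl addrA [h%:A]mulr1.
by move=> Df; split; rewrite /derivable /derive /= E.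
Qed.

Lemma MVT_line (x v : V) (T : R) : 0 < T ->
  (forall t, 0 <= t <= T -> derivable f (t *: v + x) v) ->
  exists2 t, 0 < t < T & f (T *: v + x) - f x = T * 'D_v f (t *: v + x).
Proof.
move=> T0 Df.
have Dline t : 0 <= t <= T ->
    is_derive t 1 (fun s => f (s *: v + x)) ('D_v f (t *: v + x)).
  by move/Df/is_derive_line.
have Doo t : t \in `]0, T[ ->
    is_derive t 1 (fun s => f (s *: v + x)) ('D_v f (t *: v + x)).
  by rewrite in_itv => /andP [t0 tT]; apply: Dline; rewrite !ltW.
have cont : {within `[0, T], continuous (fun s => f (s *: v + x))}.
  apply: derivable_within_continuous => t; rewrite in_itv => /Dline D.
  exact: ex_derive.
have [t t0T Et] := MVT T0 Doo cont.
exists t; first by rewrite in_itv in t0T.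
by move: Et; rewrite scale0r add0r subr0 mulrC.
Qed.

Lemma le_f_box_corner (x u v : V) (m M r T : R) : 0 < r -> 0 < T ->
  (forall th s, - T <= th <= 0 -> 0 <= s <= r ->
     let y := th *: u + (s *: v + x) in
     [/\ derivable f y u, derivable f y v, m <= 'D_u f y & 'D_v f y <= M]) ->
  f ((- T) *: u + (r *: v + x)) <= f x + M * r - m * T.
Proof.
move=> r0 T0 box.
have T0' : - T <= (0 : R) <= 0 by apply/andP; split; lra.
have rr : 0 <= r <= r by apply/andP; split; lra.
have [s /andP [s0 sr] Ev] : exists2 s, 0 < s < r &
    f (r *: v + x) - f x = r * 'D_v f (s *: v + x).
  apply: MVT_line => // s sr.
  by have [_ + _ _] := box 0 s T0' sr; rewrite scale0r add0r.
have hs : 0 <= s <= r by apply/andP; split; lra.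
have [_ _ _ DvM] := box 0 s T0' hs.
rewrite scale0r add0r in DvM.
set b := r *: v + x in Ev *.
set y0 := - T *: u + b.
have shift t : t *: u + y0 = (t - T) *: u + b by rewrite addrA -scalerDl.
have [th /andP [th0 thT] Eu] : exists2 th, 0 < th < T &
    f (T *: u + y0) - f y0 = T * 'D_u f (th *: u + y0).
  apply: MVT_line => // th /andP [th0 thT].
  have hth : - T <= th - T <= 0 by apply/andP; split; lra.
  by rewrite shift; have [] := box (th - T) r hth rr.
have hth : - T <= th - T <= 0 by apply/andP; split; lra.
have [_ _ mDu _] := box (th - T) r hth rr.
rewrite !shift subrr scale0r add0r in Eu.
have : r * 'D_v f (s *: v + x) <= r * M by rewrite ler_pM2l.
have : T * m <= T * 'D_u f ((th - T) *: u + b) by rewrite ler_pM2l.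
lra.
Qed.

End LineDerivative.

Section ConeMonotone.
Variables (R : realType) (m : nat) (G : set 'rV[R]_m) (f : 'rV[R]_m -> R).
Hypothesis coneG : open_convex_cone G.
Hypothesis posG : forall x : 'rV[R]_m, (forall i, 0 < x 0 i) -> G x.
Hypothesis smooth_f : smooth_on G f.
Hypothesis pderiv_gt0 : forall x i, G x -> 0 < pderiv f i x.

(* G is open, so x - (e/2) 1 is in G for some e > 0, and x + p is the midpoint of
   2 (x - (e/2) 1) in G and 2 (p + (e/2) 1) in the positive cone. *)
Lemma cone_addr_nonneg (x p : 'rV[R]_m) :
  G x -> (forall i, 0 <= p 0 i) -> G (x + p).
Proof.
case: coneG => oG scaleG convG Gx p0.
pose one : 'rV[R]_m := const_mx 1.
have cont : {for 0, continuous (fun e : R => x - e *: one)}.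
  by apply: continuousB; [exact: cst_continuous | exact: scalel_continuous].
have : nbhs ((fun e : R => x - e *: one) 0) G by rewrite scale0r subr0; exact: oG.
move=> /cont /nbhs_ballP [e e0 He].
have Gxe : G (x - (e / 2) *: one).
  apply: (He (e / 2)); rewrite /ball /= sub0r normrN gtr0_norm ?divr_gt0 //.
  by rewrite ltr_pdivrMr // ltr_pMr // ltr1n.
have -> : x + p = (1 - 2^-1) *: (2 *: (x - (e / 2) *: one)) +
                  2^-1 *: (2 *: (p + (e / 2) *: one)).
  by apply/rowP => i; rewrite !mxE; field.
apply: convG.
- exact: scaleG.
- apply: scaleG => //; apply: posG => i.
  by rewrite !mxE mulr1 ltr_wpDl // divr_gt0.
- by rewrite invr_ge0 ler0n /= invf_le1 // ler1n.
Qed.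

Lemma derivable_on_G (x v : 'rV[R]_m) : G x -> derivable f x v.
Proof. by move=> Gx; apply: (smooth_f [::]).1. Qed.

Lemma lt_f_addr_basis (x : 'rV[R]_m) (i : 'I_m) (d : R) :
  G x -> 0 < d -> f x < f (d *: basis_vec R i + x).
Proof.
move=> Gx d0; rewrite -subr_gt0.
have G_line t : 0 <= t -> G (t *: basis_vec R i + x).
  move=> t0; rewrite addrC; apply: cone_addr_nonneg => // j.
  by rewrite !mxE mulr_ge0 ?ler0n.
have [t /andP [t0 _] ->] : exists2 t, 0 < t < d &
    f (d *: basis_vec R i + x) - f x = d * 'D_(basis_vec R i) f (t *: basis_vec R i + x).
  by apply: MVT_line => // t /andP [t0 _]; apply/derivable_on_G/G_line.
by rewrite mulr_gt0 //; apply/pderiv_gt0/G_line/ltW.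
Qed.

Lemma le_f_addr_nonneg (x p : 'rV[R]_m) :
  G x -> (forall i, 0 <= p 0 i) -> f x <= f (x + p).
Proof.
move=> Gx p0; rewrite [p]row_sum_delta.
suff : G (x + \sum_(j <- index_enum 'I_m) p 0 j *: delta_mx 0 j) /\
       f x <= f (x + \sum_(j <- index_enum 'I_m) p 0 j *: delta_mx 0 j) by case.
elim: (index_enum _) => [|j s [Gs les]]; first by rewrite big_nil addr0.
rewrite big_cons addrCA; split.
  by rewrite addrC; apply: cone_addr_nonneg => // k; rewrite !mxE mulr_ge0 ?ler0n.
apply: (le_trans les); have [->|p0j] := eqVneq (p 0 j) 0; first by rewrite scale0r add0r.
by apply/ltW/lt_f_addr_basis => //; rewrite lt_def p0j p0.
Qed.

End ConeMonotone.

Section ImplicitCurve.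
Variables (R : realType) (n : nat) (G : set 'rV[R]_n.+1) (f : 'rV[R]_n.+1 -> R).
Variables (a : 'rV[R]_n.+1) (g : R -> R).
Hypothesis coneG : open_convex_cone G.
Hypothesis posG : forall x : 'rV[R]_n.+1, (forall i, 0 < x 0 i) -> G x.
Hypothesis sumG : forall x : 'rV[R]_n.+1, G x -> 0 < \sum_i x 0 i.
Hypothesis smooth_f : smooth_on G f.
Hypothesis pderiv_gt0 : forall x i, G x -> 0 < pderiv f i x.
Hypothesis fa1 : f a = 1.
Hypothesis a0_gt0 : 0 < a 0 ord0.
Hypothesis a_sorted : forall i j : 'I_n.+1, (i <= j)%N -> a 0 i <= a 0 j.

Definition curve_pt (t w : R) : 'rV[R]_n.+1 :=
  \row_i (if i == ord0 then t else a 0 i * w).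
Definition a_tail : 'rV[R]_n.+1 := \row_i (if i == ord0 then 0 else a 0 i).
Local Notation e1 := (basis_vec R (@ord0 n)).

Hypothesis g_spec : forall w, 1 <= w ->
  G (curve_pt (g w) w) /\ f (curve_pt (g w) w) = 1.

Lemma a_gt0 i : 0 < a 0 i.
Proof. exact: lt_le_trans a0_gt0 (@a_sorted ord0 i (leq0n i)). Qed.

Lemma G_a : G a.
Proof. exact/posG/a_gt0. Qed.

Lemma curve_pt_a : curve_pt (a 0 ord0) 1 = a.
Proof. by apply/rowP => i; rewrite !mxE; case: eqP => [->|_]; rewrite ?mulr1. Qed.

Lemma curve_ptD1 t t' w : curve_pt t' w = (t' - t) *: e1 + curve_pt t w.
Proof. by apply/rowP => i; rewrite !mxE eqxx; case: (i == ord0) => /=; ring. Qed.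

Lemma curve_ptDw t w w' : curve_pt t w' = (w' - w) *: a_tail + curve_pt t w.
Proof. by apply/rowP => i; rewrite !mxE; case: (i == ord0) => /=; ring. Qed.

Lemma curve_pt_shift_a th s : curve_pt (a 0 ord0 + th) (1 + s) = th *: e1 + (s *: a_tail + a).
Proof.
apply/rowP => i; rewrite -[in RHS]curve_pt_a !mxE eqxx.
by have [_|_] := eqVneq i ord0; rewrite /=; ring.
Qed.

Lemma lt_f_curve_pt t t' w : G (curve_pt t w) -> t < t' ->
  G (curve_pt t' w) /\ f (curve_pt t w) < f (curve_pt t' w).
Proof.
move=> Gt tt'; rewrite (curve_ptD1 t); split.
  rewrite addrC; apply: (cone_addr_nonneg coneG posG) => // j.
  by rewrite !mxE mulr_ge0 ?ler0n ?subr_ge0 ?ltW.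
by apply: (lt_f_addr_basis coneG posG smooth_f pderiv_gt0) => //; rewrite subr_gt0.
Qed.

Lemma g1 : g 1 = a 0 ord0.
Proof.
have [G1 f1] := g_spec (lexx 1).
have Ga : G (curve_pt (a 0 ord0) 1) by rewrite curve_pt_a; exact: G_a.
have [lt1|gt1|//] := ltgtP (g 1) (a 0 ord0).
- by have [_] := lt_f_curve_pt G1 lt1; rewrite curve_pt_a fa1 f1 ltxx.
- by have [_] := lt_f_curve_pt Ga gt1; rewrite curve_pt_a fa1 f1 ltxx.
Qed.

Lemma g_nonincr w w' : 1 <= w -> w <= w' -> g w' <= g w.
Proof.
move=> w1 ww'; rewrite leNgt; apply/negP => gww'.
have [Gw fw] := g_spec w1; have [_ fw'] := g_spec (le_trans w1 ww').
have [Gw'w lt_w] := lt_f_curve_pt Gw gww'.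
have : f (curve_pt (g w') w) <= f (curve_pt (g w') w').
  rewrite (curve_ptDw _ w w') addrC; apply: (le_f_addr_nonneg coneG posG smooth_f pderiv_gt0) => // i.
  by rewrite !mxE mulr_ge0 ?subr_ge0 //; case: ifP => _ //; exact/ltW/a_gt0.
by rewrite fw'; move: lt_w; rewrite fw; lra.
Qed.

Lemma g_defect_decr x y : 1 <= x -> x < y ->
  g y - a 0 ord0 * y < g x - a 0 ord0 * x.
Proof.
move=> x1 xy; have := g_nonincr x1 (ltW xy).
have : a 0 ord0 * x < a 0 ord0 * y by rewrite ltr_pM2l.
lra.
Qed.

Lemma g_defect_gt w : 1 <= w -> - (\sum_i a 0 i) * w < g w - a 0 ord0 * w.
Proof.
move=> w1; have [/sumG] := g_spec w1.
rewrite !big_ord_recl /= !mxE eqxx /=.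
under eq_bigr do rewrite !mxE eq_sym (negbTE (neq_lift _ _)).
rewrite -mulr_suml; lra.
Qed.

Lemma near_a_pderiv_bounds : \forall y \near a,
  [/\ G y, pderiv f ord0 a / 2 <= pderiv f ord0 y & 'D_a_tail f y <= `|'D_a_tail f a| + 1].
Proof.
have Ga := G_a.
have cont1 : {for a, continuous (fun y => pderiv f ord0 y)}.
  exact: (smooth_f [:: e1]).2 a (mem_set Ga).
have contv : {for a, continuous (fun y => 'D_a_tail f y)}.
  exact: (smooth_f [:: a_tail]).2 a (mem_set Ga).
have m0 : 0 < pderiv f ord0 a / 2 by rewrite divr_gt0 ?pderiv_gt0.
near=> y; split.
- by near: y; case: coneG => oG _ _; exact: oG.
- near: y; move/cvgrPdist_lt: cont1 => /(_ _ m0); apply: filterS => y.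
  by rewrite ltr_distlC => /andP [+ _]; lra.
- near: y; move/cvgrPdist_lt: contv => /(_ 1 ltr01); apply: filterS => y.
  rewrite ltr_distlC => /andP [_ +]; have := ler_norm ('D_a_tail f a); lra.
Unshelve. all: by end_near.
Qed.

Lemma g_lower_near1 : exists L0 eta : R, 0 < eta /\
  forall w, 1 <= w <= 1 + eta -> a 0 ord0 - L0 * (w - 1) <= g w.
Proof.
set m := pderiv f ord0 a / 2.
have m0 : 0 < m by apply: divr_gt0 => //; exact/pderiv_gt0/G_a.
set M := `|'D_a_tail f a| + 1.
have M0 : 0 < M by rewrite ltr_pwDr.
have [rho rho0 ball_a] := (nbhs_ballP _ _).1 near_a_pderiv_bounds.
(* m L0 = M + 1: stepping back L0 eps along e1 loses more than the eps step along
   a_tail gains. *)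
set L0 := (M + 1) / m.
have L00 : 0 < L0 by rewrite divr_gt0 // addr_gt0.
set K := L0 * `|e1| + `|a_tail|.
have K1 : 0 < K + 1 by rewrite ltr_pwDr // addr_ge0 // mulr_ge0 // ltW.
set eta := rho / (K + 1).
have eta0 : 0 < eta by rewrite divr_gt0.
have etaK : eta * (K + 1) = rho by rewrite divfK ?gt_eqF.
exists L0, eta; split => // w /andP [w1 w_eta].
have [->|w_ne1] := eqVneq w 1; first by rewrite g1 subrr mulr0 subr0.
set eps := w - 1.
have eps0 : 0 < eps by rewrite subr_gt0 lt_def w_ne1.
have box th s : - (L0 * eps) <= th <= 0 -> 0 <= s <= eps ->
    [/\ G (th *: e1 + (s *: a_tail + a)), m <= pderiv f ord0 (th *: e1 + (s *: a_tail + a))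
      & 'D_a_tail f (th *: e1 + (s *: a_tail + a)) <= M].
  move=> /andP [th_lb th_ub] /andP [s0 s_ub]; apply: ball_a.
  rewrite -ball_normE /= addrA opprD addrCA subrr addr0 normrN.
  apply: (le_lt_trans (ler_normD _ _)); rewrite !normrZ (ger0_norm s0) ler0_norm //.
  have : eps * (K + 1) <= rho by rewrite -etaK ler_pM2r // lerBlDl.
  have : - th * `|e1| <= L0 * eps * `|e1| by rewrite ler_wpM2r // lerNl.
  have : s * `|a_tail| <= eps * `|a_tail| by rewrite ler_wpM2r.
  rewrite /K; nra.
have : f (- (L0 * eps) *: e1 + (eps *: a_tail + a)) <= f a + M * eps - m * (L0 * eps).
  have T0 : 0 < L0 * eps by rewrite mulr_gt0.
  apply: le_f_box_corner => // th s hth hs.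
  have [Gy mDy DyM] := box th s hth hs.
  by split => //; apply: (derivable_on_G smooth_f).
rewrite -curve_pt_shift_a [1 + eps]subrKC.
have -> : m * (L0 * eps) = (M + 1) * eps by rewrite /L0 mulrA mulrCA divff ?gt_eqF // mulr1.
rewrite fa1 => lt1; rewrite leNgt; apply/negP => lt_g.
have [Gw fw] := g_spec w1.
have [_] := lt_f_curve_pt Gw lt_g; rewrite fw; lra.
Qed.

Lemma g_defect_lower : exists2 L : R, 0 < L &
  forall w, 1 <= w -> - L * (w - 1) <= g w - a 0 ord0 * w.
Proof.
have [L0 [eta [eta0 near1]]] := g_lower_near1.
set K := \sum_i a 0 i.
have K0 : 0 < K by rewrite /K big_ord_recl ltr_pwDl ?a_gt0 // sumr_ge0 // => i _; exact/ltW/a_gt0.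
set Kq := K * (1 + eta) / eta.
have Kq_eta : Kq * eta = K * (1 + eta) by rewrite /Kq divfK ?gt_eqF.
have Kq0 : 0 <= Kq by rewrite /Kq divr_ge0 ?mulr_ge0 // ltW // addr_gt0.
exists (`|L0| + a 0 ord0 + Kq) => [|w w1]; first by have := normr_ge0 L0; have := @a_gt0 ord0; lra.
have := normr_ge0 L0; have := ler_norm L0; have := @a_gt0 ord0.
have [w_near|w_far] := lerP w (1 + eta).
  by have := near1 w; rewrite w1 w_near => /(_ isT); nra.
have := g_defect_gt w1; rewrite -/K.
(* for w > 1 + eta, w / (w - 1) < (1 + eta) / eta *)
have : K * w <= Kq * (w - 1).
  rewrite -(ler_pM2r eta0) [Kq * _ * _]mulrAC Kq_eta; nra.
nra.
Qed.

End ImplicitCurve.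

Section RealFunctions.
Variable R : realType.

Lemma continuous_within_itvcc (y : R -> R) (a b c : R) : a <= b ->
  {within `[a, +oo[, continuous y} -> {within `[b, c], continuous y}.
Proof.
move=> ab; apply: continuous_subspaceW => x /=; rewrite !in_itv /= => /andP [bx _].
by rewrite (le_trans ab bx).
Qed.

Lemma derivable1_continuous (y : R -> R) (x : R) : derivable y x 1 -> {for x, continuous y}.
Proof. by move/derivable1_diffP/differentiable_continuous. Qed.

Lemma continuous_mul_expR (y : R -> R) (A : set R) (k d : R) :
  {within A, continuous y} -> {within A, continuous (fun s => (y s - d) * expR (k * s))}.
Proof.
move=> cy x; apply: (@continuousM R (subspace A) (fun s => y s - d)).
  by apply: (@continuousB R R (subspace A) y (cst d)); [exact: cy | exact: cst_continuous].
move: x; apply: continuous_subspaceT => t.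
apply: (@continuous_comp _ _ _ ( *%R k) expR); last exact: continuous_expR.
by apply: (@continuousM _ _ (cst k) id); [exact: cst_continuous | exact: cvg_id].
Qed.

Lemma is_derive_mul_expR (y : R -> R) (x k d dy : R) : is_derive x 1 y dy ->
  is_derive x 1 (fun s => (y s - d) * expR (k * s)) (expR (k * x) * (dy + k * (y x - d))).
Proof.
by move=> Dy; apply: is_derive_eq; rewrite /GRing.scale /= mulr1 subr0; ring.
Qed.

Lemma continuous_induction (y : R -> R) (a b s : R) :
  {within `[a, +oo[, continuous y} -> b < y a ->
  (forall t, a < t -> (forall r, a <= r < t -> b < y r) -> b < y t) ->
  a <= s -> b < y s.
Proof.
move=> cy ya step sa; rewrite ltNge; apply/negP => ys.
pose B := [set t | a <= t <= s /\ forall r, a <= r <= t -> b < y r].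
have Ba : B a.
  by split=> [|r /andP [ar ra]]; [rewrite lexx | rewrite (@le_anti _ _ r a) ?ar ?ra].
have supB : has_sup B by split; [exists a | exists s => t [/andP []]].
set t0 := sup B.
have at0 : a <= t0 by apply: sup_upper_bound.
have t0s : t0 <= s by apply: ge_sup => [|t [/andP []]]; first exists a.
have below r : a <= r -> r < t0 -> b < y r.
  move=> ar rt0; have rt0' : 0 < t0 - r by rewrite subr_gt0.
  have [e [_ Be] re] := sup_adherent rt0' supB.
  by apply: Be; rewrite ar; rewrite -/t0 in re; lra.
have yt0 : b < y t0.
  have [<-//|at0'] := eqVneq a t0.
  by apply: step => [|r /andP []]; [rewrite lt_neqAle at0' | exact: below].
have t0s' : t0 < s by rewrite lt_def t0s andbT; apply: contra_leN ys => /eqP ->.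
have [d d0 near_t0] : exists2 d, 0 < d & forall r, a <= r -> `|t0 - r| < d -> b < y r.
  have := (subspace_continuousP _ _).1 cy t0; rewrite /= in_itv /= at0 => /(_ isT).
  move/cvgrPdist_lt => /(_ (y t0 - b)); rewrite subr_gt0 => /(_ yt0).
  rewrite near_withinE => /nbhs_ballP [d d0 dball]; exists d => // r ar tr.
  have := dball r tr; rewrite /= in_itv /= ar => /(_ isT).
  by rewrite /from_subspace ltr_distlC => /andP [+ _]; lra.
pose t' := Num.min (t0 + d / 2) s.
have Bt' : B t'.
  split=> [|r /andP [ar rt']]; first by rewrite le_min ge_min lexx orbT andbT; lra.
  have [rt0|t0r] := ltP r t0; first exact: below.
  apply: near_t0 => //; move: rt'; rewrite le_min => /andP [r_ub _].
  rewrite ler0_norm ?subr_le0 //; lra.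
have := sup_upper_bound supB Bt'; rewrite -/t0 /t' ge_min => /orP [|]; lra.
Qed.

Lemma IVT_section (v : R -> R) (a b : R) : a < b -> {within `[a, b], continuous v} ->
  exists tau : R -> R, forall c, c \in `]v b, v a[ -> (tau c \in `]a, b[) /\ v (tau c) = c.
Proof.
move=> ab cv.
pose tau c := xget a [set t | (t \in `[a, b]) /\ v t = c].
exists tau => c; rewrite in_itv /= => /andP [vbc cva].
have [tI vt] : (tau c \in `[a, b]) /\ v (tau c) = c.
  apply: (@xgetPex _ a [set t | (t \in `[a, b]) /\ v t = c]).
  have cI : Num.min (v a) (v b) <= c <= Num.max (v a) (v b).
    by rewrite ge_min le_max (ltW vbc) (ltW cva) orbT.
  by have [t tI vt] := IVT (ltW ab) cv cI; exists t.
split=> //; move: tI; rewrite !in_itv /= => /andP [a_t t_b].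
rewrite !lt_neqAle a_t t_b !andbT; apply/andP; split.
- by apply: contraTneq cva => E; rewrite -vt -E ltxx.
- by apply: contraTneq vbc => E; rewrite -vt E ltxx.
Qed.

Lemma is_derive_decr_inverse (v dv : R -> R) (a b c : R) : a < b ->
  {within `[a, b], continuous v} ->
  (forall t, t \in `]a, b[ -> is_derive t 1 v (dv t) /\ dv t < 0) ->
  c \in `]v b, v a[ ->
  exists2 tau : R -> R, (\forall c' \near c, (tau c' \in `]a, b[) /\ v (tau c') = c') &
    is_derive c 1 tau (dv (tau c))^-1.
Proof.
move=> ab cv Dv cI.
have decr : {in `[a, b] &, {homo v : x y /~ x < y}}.
  apply: (ltr0_derive1_lt_cc _ _ cv) => t /Dv [Dt dt0].
  - exact: ex_derive.
  - by rewrite derive1E derive_val.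
have inj : {in `[a, b] &, injective v}.
  move=> t t' tI t'I E; have [tt'|t't|//] := ltgtP t t'.
  - by have := decr _ _ t'I tI tt'; rewrite E ltxx.
  - by have := decr _ _ tI t'I t't; rewrite E ltxx.
have [tau tauP] := IVT_section ab cv.
exists tau; first by near=> c'; apply: tauP; near: c'; exact: near_in_itvoo.
have [t0I vt0] := tauP c cI.
set t0 := tau c in t0I vt0 *.
have [Dt0 dt0] := Dv t0 t0I.
rewrite -{1}vt0; apply: is_derive_inverse; last by rewrite lt_eqF.
- near=> t; have tI : t \in `]a, b[ by near: t; exact: near_in_itvoo.
  have [a_t t_b] : a < t /\ t < b by move: tI; rewrite in_itv => /andP [].
  have aI : a \in `[a, b] by rewrite bound_itvE ltW.
  have bI : b \in `[a, b] by rewrite bound_itvE ltW.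
  have tI' := subset_itv_oo_cc tI.
  have vtI : v t \in `]v b, v a[.
    by rewrite in_itv /= (decr _ _ bI tI' t_b) (decr _ _ tI' aI a_t).
  have [tauI vtau] := tauP _ vtI.
  by apply: inj; rewrite ?subset_itv_oo_cc.
- near=> t; have tI : t \in `]a, b[ by near: t; exact: near_in_itvoo.
  by have [Dt _] := Dv t tI; exact/derivable1_continuous/ex_derive.
Unshelve. all: by end_near.
Qed.

End RealFunctions.

Section ODE.
Variables (R : realType) (H : R -> R) (C L : R).
Hypothesis C_gt0 : 0 < C.
Hypothesis L_ge0 : 0 <= L.
Hypothesis H1 : H 1 = 0.
Hypothesis H_decr : forall x y, 1 <= x -> x < y -> H y < H x.
Hypothesis H_lower : forall w, 1 <= w -> - L * (w - 1) <= H w.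

Definition ode_sol (c : R) (y : R -> R) :=
  [/\ y 1 = c, {within `[1, +oo[, continuous y} &
      forall s : R, 1 < s -> is_derive s 1 y (H (y s) / (C * s))].

Lemma H_lt0 x : 1 < x -> H x < 0.
Proof. by move=> x1; rewrite -H1; apply: H_decr. Qed.

Lemma H_nonincr x y : 1 <= x -> x <= y -> H y <= H x.
Proof. by move=> x1; rewrite le_eqVlt => /predU1P [->//|xy]; exact/ltW/H_decr. Qed.

Section Solution.
Variables (c : R) (y : R -> R).
Hypothesis c_gt1 : 1 < c.
Hypothesis y_sol : ode_sol c y.

Lemma sol_weighted_ndecr t : 1 <= t -> (forall r, 1 < r < t -> 1 < y r) ->
  (c - 1) * expR (L / C) <= (y t - 1) * expR (L / C * t).
Proof.
case: y_sol => y1 cy Dy t1 y_gt1.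
pose z s := (y s - 1) * expR (L / C * s).
have Dz (x : R) : 1 < x -> is_derive x 1 z
    (expR (L / C * x) * (H (y x) / (C * x) + L / C * (y x - 1))).
  by move=> x1; apply: is_derive_mul_expR; exact: Dy.
have cz : {within `[1, t], continuous z}.
  by apply: continuous_mul_expR; exact: continuous_within_itvcc (lexx 1) cy.
suff : z 1 <= z t by rewrite /z y1 mulr1.
apply: (ger0_derive1_ndecr _ _ cz (lexx 1) t1 (lexx t)) => x;
  rewrite in_itv /= => /andP [x1 xt]; first by have [] := Dz x x1.
rewrite derive1E; have [_ ->] := Dz x x1; rewrite mulr_ge0 ?expR_ge0 //.
have yx1 : 1 < y x by apply: y_gt1; rewrite x1.
have Cx : 0 < C * x by rewrite mulr_gt0 // (lt_trans ltr01).
have -> : H (y x) / (C * x) + L / C * (y x - 1) = (H (y x) + L * (y x - 1) * x) / (C * x).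
  by field; rewrite !gt_eqF // (lt_trans ltr01).
apply: divr_ge0; last exact: ltW.
have := H_lower (ltW yx1).
have : L * (y x - 1) * 1 <= L * (y x - 1) * x.
  by rewrite ler_wpM2l ?(ltW x1) // mulr_ge0 // subr_ge0 ltW.
lra.
Qed.

Lemma sol_gt1 s : 1 <= s -> 1 < y s.
Proof.
have [y1 cy _] := y_sol.
apply: (continuous_induction cy) => [|t t1 y_gt1]; first by rewrite y1.
have y_gt1' r : 1 < r < t -> 1 < y r.
  by case/andP => r1 rt; apply: y_gt1; rewrite (ltW r1).
have pos : 0 < (c - 1) * expR (L / C) by rewrite mulr_gt0 ?expR_gt0 ?subr_gt0.
have := lt_le_trans pos (sol_weighted_ndecr (ltW t1) y_gt1').
by rewrite pmulr_lgt0 ?expR_gt0 // subr_gt0.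
Qed.

Lemma sol_lower s : 1 <= s -> 1 + (c - 1) * expR (L / C * (1 - s)) <= y s.
Proof.
move=> s1; have y_gt1 r : 1 < r < s -> 1 < y r by case/andP => r1 _; exact/sol_gt1/ltW.
rewrite mulrBr mulr1 expRB mulrA.
suff : (c - 1) * expR (L / C) / expR (L / C * s) <= y s - 1 by lra.
by rewrite ler_pdivrMr ?expR_gt0 //; exact: sol_weighted_ndecr.
Qed.

Lemma sol_decr s s' : 1 <= s -> s < s' -> y s' < y s.
Proof.
have [_ cy Dy] := y_sol; move=> s1 ss'.
have cy' : {within `[1, s'], continuous y} by exact: continuous_within_itvcc (lexx 1) cy.
have sI : s \in `[1, s'] by rewrite in_itv /= s1 ltW.
have s'I : s' \in `[1, s'] by rewrite in_itv /= lexx (le_trans s1 (ltW ss')).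
apply: (ltr0_derive1_lt_cc _ _ cy' s'I sI ss') => x; rewrite in_itv /= => /andP [x1 _].
- by have [] := Dy x x1.
- rewrite derive1E; have [_ ->] := Dy x x1.
  by rewrite pmulr_llt0 ?H_lt0 ?sol_gt1 ?ltW // invr_gt0 mulr_gt0 // (lt_trans ltr01).
Qed.

Lemma sol_le_init s : 1 <= s -> y s <= c.
Proof.
have [y1 _ _] := y_sol; rewrite -y1 le_eqVlt => /predU1P [->//|s1].
exact/ltW/sol_decr.
Qed.

Lemma sol_rescale t : 1 < t -> ode_sol (y t) (fun r => y (t * r)).
Proof.
have [_ _ Dy] := y_sol; move=> t1.
have Dyt (r : R) : 1 <= r -> is_derive r 1 (fun r => y (t * r)) (H (y (t * r)) / (C * r)).
  move=> r1; have tr1 : 1 < t * r by rewrite (lt_le_trans t1) // ler_peMr // ltW // (lt_trans ltr01).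
  have Dscale : is_derive r 1 ( *%R t) t by apply: is_derive_eq; rewrite [t%:A]mulr1.
  apply: (is_derive_eq (is_derive1_comp (Dy _ tr1) Dscale)).
  have r0 : 0 < r by lra.
  have t0 : 0 < t by lra.
  by field; rewrite !gt_eqF.
split; first by rewrite mulr1.
- apply: continuous_in_subspaceT => r; rewrite in_setE /= in_itv /= andbT => r1.
  by have D := Dyt r r1; exact/derivable1_continuous/ex_derive.
- by move=> r r1; exact/Dyt/ltW.
Qed.

End Solution.

Lemma sol_sqrdist_le c c' y1 y2 : 1 < c -> 1 < c' -> ode_sol c y1 -> ode_sol c' y2 ->
  forall s, 1 <= s -> (y1 s - y2 s) ^+ 2 <= (c - c') ^+ 2.
Proof.
move=> c1 c'1 sol1 sol2; have [y11 cy1 Dy1] := sol1; have [y21 cy2 Dy2] := sol2.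
pose D s := (y1 s - y2 s) ^+ 2.
have DD (x : R) : 1 < x -> is_derive x 1 D
    (2 * (y1 x - y2 x) * (H (y1 x) - H (y2 x)) / (C * x)).
  move=> x1; have := Dy1 x x1; have := Dy2 x x1 => D2 D1.
  have x0 : 0 < x by lra.
  by apply: is_derive_eq; rewrite /GRing.scale /=; field; rewrite !gt_eqF.
move=> s s1; rewrite -y11 -y21 -/(D s) -/(D 1).
apply: (ler0_derive1_nincry _ _ _ (lexx 1) s1) => [x|x|].
- by rewrite in_itv /= andbT => x1; have [] := DD x x1.
- rewrite in_itv /= andbT => x1; rewrite derive1E; have [_ ->] := DD x x1.
  have u1 := sol_gt1 c1 sol1 (ltW x1); have v1 := sol_gt1 c'1 sol2 (ltW x1).
  have mono : (y1 x - y2 x) * (H (y1 x) - H (y2 x)) <= 0.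
    have [le12|lt21] := lerP (y1 x) (y2 x).
    + by have := H_nonincr (ltW u1) le12; nra.
    + by have := H_nonincr (ltW v1) (ltW lt21); nra.
  have Cx : 0 < C * x by rewrite mulr_gt0 //; lra.
  by rewrite pmulr_lle0 ?invr_gt0 // -mulrA pmulr_rle0.
- move=> x; apply: (@continuousM R (subspace _) (fun s => y1 s - y2 s)) => //;
  by apply: (@continuousB R R (subspace _) y1 y2); [exact: cy1 | exact: cy2].
Qed.

Lemma sol_unique c y1 y2 : 1 < c -> ode_sol c y1 -> ode_sol c y2 ->
  forall s, 1 <= s -> y1 s = y2 s.
Proof.
move=> c1 sol1 sol2 s s1; have := sol_sqrdist_le c1 c1 sol1 sol2 s1.
rewrite subrr expr0n /= => le0; apply/eqP; rewrite -subr_eq0 -sqrf_eq0.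
by rewrite eq_le le0 sqr_ge0.
Qed.

Section Flow.
Variable W : R -> R -> R.
Hypothesis W_sol : forall c : R, 1 < c -> ode_sol c (W c).

Lemma W_rescale (c t s : R) : 1 < c -> 1 < t -> 1 <= s -> W (W c t) s = W c (t * s).
Proof.
move=> c1 t1 s1; have Wct1 := sol_gt1 c1 (W_sol c1) (ltW t1).
exact: sol_unique Wct1 (W_sol Wct1) (sol_rescale (W_sol c1) t1) s s1.
Qed.

Lemma W_local_inverse (c : R) : 1 < c -> exists2 cc : R, 1 < cc &
  exists2 tau : R -> R, (\forall c' \near c, (tau c' \in `]1, 2[) /\ W cc (tau c') = c') &
    is_derive c 1 tau ((H c / (C * tau c))^-1).
Proof.
move=> c1; have [Wc1 _ _] := W_sol c1.
have le12 : (1 : R) <= 2 by rewrite ler1n.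
have Wc2 : W c 2 < c by rewrite -{2}Wc1; apply: (sol_decr c1 (W_sol c1)); rewrite ?ltr1n.
pose cc := c + (c - W c 2) / 2.
have cc1 : 1 < cc by rewrite /cc; lra.
exists cc => //; have [Wcc1 cv Dv] := W_sol cc1.
have Wcc2 : W cc 2 < c.
  have := sol_sqrdist_le cc1 c1 (W_sol cc1) (W_sol c1) le12.
  have := sol_gt1 c1 (W_sol c1) le12; rewrite /cc; nra.
have [tau near_tau Dtau] : exists2 tau : R -> R,
    (\forall c' \near c, (tau c' \in `]1, 2[) /\ W cc (tau c') = c') &
    is_derive c 1 tau ((H (W cc (tau c)) / (C * tau c))^-1).
  apply: (is_derive_decr_inverse (dv := fun t => H (W cc t) / (C * t))).
  - by rewrite ltr1n.
  - exact: continuous_within_itvcc (lexx 1) cv.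
  - move=> t; rewrite in_itv /= => /andP [t1 _]; split; first exact: Dv.
    by rewrite pmulr_llt0 ?H_lt0 ?(sol_gt1 cc1) ?ltW // invr_gt0 mulr_gt0 //; lra.
  - by rewrite in_itv /= Wcc2 Wcc1 /cc; lra.
have [_ Wtau] := nbhs_singleton near_tau; rewrite Wtau in Dtau.
by exists tau.
Qed.

(* Near c, W c' s = W cc (tau c' * s) with tau the local inverse of W cc. *)
Lemma is_derive_W (c s : R) : 1 < c -> 1 <= s ->
  is_derive c 1 (fun c' => W c' s) (H (W c s) / H c).
Proof.
move=> c1 s1; have [cc cc1 [tau near_tau Dtau]] := W_local_inverse c1.
have [_ _ Dv] := W_sol cc1.
have [t0I Wt0] := nbhs_singleton near_tau.
set t0 := tau c in t0I Wt0 Dtau.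
have [t01 t02] : 1 < t0 /\ t0 < 2 by move: t0I; rewrite in_itv => /andP [].
have rep : \forall c' \near c, W cc (tau c' * s) = W c' s.
  near=> c'; have [tI Wt] : (tau c' \in `]1, 2[) /\ W cc (tau c') = c' by near: c'.
  by rewrite -[in RHS]Wt W_rescale //; move: tI; rewrite in_itv => /andP [].
apply: near_eq_is_derive rep _.
have Dts : is_derive c 1 (fun c' => tau c' * s) ((H c / (C * t0))^-1 * s).
  by apply: is_derive_eq; rewrite /GRing.scale /= mulr0 add0r mulrC.
have Dvts : is_derive (t0 * s) 1 (W cc) (H (W cc (t0 * s)) / (C * (t0 * s))).
  by apply: Dv; nra.
apply: (is_derive_eq (@is_derive1_comp _ (W cc) (fun c' => tau c' * s) c _ _ Dvts Dts)).
rewrite -W_rescale ?Wt0 //.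
have Hc := H_lt0 c1.
have s0 : 0 < s by lra.
have t00 : 0 < t0 by lra.
by field; rewrite lt_eqF ?gt_eqF.
Unshelve. all: by end_near.
Qed.

Lemma derive1_W_in_01 (c s : R) : 1 < c -> 1 <= s ->
  derivable (fun c => W c s) c 1 /\ 0 < derive1 (fun c => W c s) c <= 1.
Proof.
move=> c1 s1; have D := is_derive_W c1 s1; split; first exact: ex_derive.
rewrite derive1E derive_val.
have Ws1 := sol_gt1 c1 (W_sol c1) s1.
have := H_nonincr (ltW Ws1) (sol_le_init c1 (W_sol c1) s1).
by rewrite ltr_ndivlMr ?H_lt0 // mul0r H_lt0 //= ler_ndivrMr ?H_lt0 // mul1r.
Qed.

Lemma W_cvgy (s : R) : 1 <= s -> (fun c => W c s) @ +oo --> +oo.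
Proof.
move=> s1; apply/cvgryPge => A.
have beta0 : 0 < expR (L / C * (1 - s)) by exact: expR_gt0.
near=> c.
have c1 : 1 < c by near: c; apply: nbhs_pinfty_gt; rewrite num_real.
have cA : A / expR (L / C * (1 - s)) + 1 <= c.
  by near: c; apply: nbhs_pinfty_ge; rewrite num_real.
apply: le_trans (sol_lower c1 (W_sol c1) s1).
have : A <= (c - 1) * expR (L / C * (1 - s)) by rewrite -ler_pdivrMr // lerBrDr.
lra.
Unshelve. all: by end_near.
Qed.

End Flow.
End ODE.

Theorem lemma2p5 (R : realType) (n : nat) (G : set 'rV[R]_n.+1)
  (f : 'rV[R]_n.+1 -> R) (a : 'rV[R]_n.+1) (g : R -> R) (delta : R)
  (W : R -> R -> R) :
  (* Gamma: proper open convex cone, positive cone <= Gamma <= {sum > 0} *)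
  open_convex_cone G -> G <> setT ->
  (forall x : 'rV[R]_n.+1, (forall i, 0 < x 0 i) -> G x) ->
  (forall x : 'rV[R]_n.+1, G x -> 0 < \sum_i x 0 i) ->
  (* f smooth, symmetric, strictly increasing in each variable, < 1 at the boundary *)
  smooth_on G f -> symmetric_on G f ->
  (forall x i, G x -> 0 < pderiv f i x) ->
  (forall x0, bdry G x0 -> limsup_lt G f x0 1) ->
  (* A = diag(a_1, ..., a_n) in calA with 0 < a_1 <= ... <= a_n *)
  calA f (diag_mx a) ->
  0 < a 0 ord0 -> (forall i j : 'I_n.+1, (i <= j)%N -> a 0 i <= a 0 j) ->
  (* g(w): (g(w), a_2 w, ..., a_n w) in Gamma and f of it equals 1, w >= 1 *)
  (forall w : R, 1 <= w ->
     G (\row_i (if i == ord0 then g w else a 0 i * w)) /\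
     f (\row_i (if i == ord0 then g w else a 0 i * w)) = 1) ->
  0 <= delta ->
  (* W c2 = w_{c2,delta}: the solution of the ODE on [1, +oo) with w(1) = c2 *)
  (forall c2 : R, 1 < c2 ->
     [/\ W c2 1 = c2,
         {within `[1, +oo[, continuous (W c2)} &
         forall s : R, 1 < s -> is_derive s 1 (W c2)
           ((g (W c2 s) - a 0 ord0 * W c2 s) / ((2 * a 0 ord_max + delta) * s))]) ->
  forall s : R, 1 <= s ->
    (forall c2 : R, 1 < c2 ->
       derivable (fun c => W c s) c2 1 /\
       0 < derive1 (fun c => W c s) c2 <= 1) /\
    (fun c => W c s) @ +oo --> +oo.
Proof.
move=> coneG _ posG sumG smooth_f sym_f pderiv_gt0 _ [_ [a' eig_a' [fa' _]]].
move=> a0 a_sorted g_spec delta0 W_sol s s1.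
have fa1 : f a = 1.
  have [sg Ea'] := eigvals_diag_perm eig_a'; rewrite Ea' in fa'.
  by have [_ <-] := sym_f sg a (G_a posG a0 a_sorted).
have [L L0 H_lower] := g_defect_lower coneG posG sumG smooth_f pderiv_gt0 fa1 a0 a_sorted g_spec.
have H1 : g 1 - a 0 ord0 * 1 = 0.
  by rewrite (g1 coneG posG smooth_f pderiv_gt0 fa1 a0 a_sorted g_spec) mulr1 subrr.
have H_decr := g_defect_decr coneG posG smooth_f pderiv_gt0 a0 a_sorted g_spec.
have C0 : 0 < 2 * a 0 ord_max + delta by have := a_gt0 a0 a_sorted ord_max; lra.
split=> [c c1|].
- exact: (derive1_W_in_01 C0 (ltW L0) H1 H_decr H_lower W_sol c1 s1).
- exact: (W_cvgy C0 (ltW L0) H_lower W_sol s1).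
Qed.
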